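(* Let $m\ge 2$, $k\in\mathbb N_0$, $0\le s\le m$ with $s+k\ge 1$. Then $$\mathcal{P}_k^s=\mathrm{Ker}_k^s\partial^+\oplus(\mathbf{x}\bullet)\,\mathrm{Ker}_{k-1}^{s+1}\partial^+,$$ and the projection of $\mathcal{P}_k^s$ onto $\mathrm{Ker}_k^s\partial^+$ along this decomposition is $P^+=-(s+k)^{-1}\partial^+(\mathbf{x}\bullet)$.
   Context: $\mathcal{C}\ell_m$ denotes either the real Clifford algebra $\mathbb{R}_{0,m}$ or the complex Clifford algebra $\mathbb{C}_m$ generated by the standard basis $e_1,\dots,e_m$ of $\mathbb{R}^m$ with relations $e_ie_j+e_je_i=-2\delta_{ij}$; $\mathcal{C}\ell_m=\bigoplus_{s=0}^m\mathcal{C}\ell_m^s$, where $\mathcal{C}\ell_m^s$ is the space of $s$-vectors. A point $\mathbf{x}\in\mathbb R^m$ is identified with the 1-vector $\sum_j x_je_j$. For a 1-vector $u$ and an $s$-vector $v$, $u\bullet v=\frac12(uv-(-1)^svu)$ and $u\wedge v=\frac12(uv+(-1)^svu)$, extended linearly in $v$; $(\mathbf{x}\bullet)$ is the pointwise operator $P\mapsto\mathbf x\bullet P$. $\mathcal P_k^s$ is the space of $k$-homogeneous $\mathcal C\ell_m^s$-valued polynomials on $\mathbb R^m$ (zero if $k<0$ or $s>m$). $\partial^+P=\sum_je_j\wedge\partial_{x_j}P$ and $\mathrm{Ker}_k^s\partial^+=\{P\in\mathcal P_k^s:\partial^+P=0\}$. *)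

From HB Require Import structures.
From mathcomp Require Import all_boot all_order all_algebra.
Set Implicit Arguments. Unset Strict Implicit. Unset Printing Implicit Defensive.
Import Order.TTheory GRing.Theory Num.Theory.
Local Open Scope ring_scope.

Section Clifford.
Variable F : numFieldType.
Variable m : nat.

(* Clifford algebra Cl_m over F (F = R gives R_{0,m}, F = C gives C_m):
   an element is its coordinate vector on the basis blades e_A, A ⊆ {0..m-1},
   e_A = e_{a1} ... e_{ap} with a1 < ... < ap. *)
Definition Cl := {ffun {set 'I_m} -> F}.

Definition cscale (c : F) (v : Cl) : Cl := [ffun A => c * v A].

(* sign in e_A e_B = csign A B e_{A Δ B}, using e_i e_j = - e_j e_i (i<>j)
   and e_i^2 = -1 *)
Definition csign (A B : {set 'I_m}) : F :=
  (-1) ^+ (#|[set p : 'I_m * 'I_m | (p.1 \in A) && (p.2 \in B) && (p.2 < p.1)%N]|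
           + #|A :&: B|)%N.

Definition cmul (u v : Cl) : Cl :=
  [ffun C => \sum_(A : {set 'I_m}) \sum_(B : {set 'I_m} | (A :\: B) :|: (B :\: A) == C)
               csign A B * u A * v B].

Definition grade (s : nat) (v : Cl) : Cl := [ffun A : {set 'I_m} => if #|A| == s then v A else 0].

Definition vec1 (j : 'I_m) : Cl := [ffun A : {set 'I_m} => if A == [set j] then 1 else 0].

(* u • v and u ∧ v for a 1-vector u, extended linearly in v over the grades *)
Definition cdot (u v : Cl) : Cl :=
  \sum_(s < m.+1) cscale (2%:R^-1)
     (cmul u (grade s v) - cscale ((-1) ^+ s) (cmul (grade s v) u)).
Definition cwedge (u v : Cl) : Cl :=
  \sum_(s < m.+1) cscale (2%:R^-1)
     (cmul u (grade s v) + cscale ((-1) ^+ s) (cmul (grade s v) u)).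

(* Cl_m-valued polynomials in x_1..x_m: coefficient of the monomial x^alpha *)
Definition midx := {ffun 'I_m -> nat}.
Definition Pol := midx -> Cl.

Definition deg (a : midx) : nat := (\sum_(i < m) a i)%N.
Definition incr (a : midx) (j : 'I_m) : midx := [ffun i => a i + (i == j)]%N.
Definition decr (a : midx) (j : 'I_m) : midx := [ffun i => a i - (i == j)]%N.

Definition padd (P Q : Pol) : Pol := fun a => P a + Q a.
Definition psub (P Q : Pol) : Pol := fun a => P a - Q a.
Definition pscale (c : F) (P : Pol) : Pol := fun a => cscale c (P a).

(* P in P_k^s (k may be negative, then P = 0) *)
Definition inP (k : int) (s : nat) (P : Pol) : Prop :=
  (forall a, (deg a)%:Z <> k -> P a = 0) /\
  (forall a (A : {set 'I_m}), #|A| <> s -> P a A = 0).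

(* (x •) P = sum_j x_j (e_j • P) *)
Definition xdot (P : Pol) : Pol :=
  fun a => \sum_(j < m) (if (0 < a j)%N then cdot (vec1 j) (P (decr a j)) else 0).

Definition pderiv (j : 'I_m) (P : Pol) : Pol :=
  fun a => cscale ((a j).+1)%:R (P (incr a j)).
Definition dplus (P : Pol) : Pol :=
  fun a => \sum_(j < m) cwedge (vec1 j) (pderiv j P a).

Definition inKer (k : int) (s : nat) (P : Pol) : Prop :=
  inP k s P /\ dplus P = (fun _ => 0).

Definition Pplus (s k : nat) (P : Pol) : Pol :=
  pscale (- ((s + k)%:R)^-1) (dplus (xdot P)).

End Clifford.

From HB Require Import structures.
From mathcomp Require Import all_boot all_order all_algebra.
From Stdlib Require Import FunctionalExtensionality.
Set Implicit Arguments. Unset Strict Implicit. Unset Printing Implicit Defensive.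
Import Order.TTheory GRing.Theory Num.Theory.
Local Open Scope ring_scope.

(* On the blade coordinates, e_j ∧ and e_j • act as the fermionic operators
   [ewedge j] and [edot j], which satisfy the canonical anticommutation
   relations.  Consequently ∂⁺∂⁺ = 0, and, since x_j and ∂_j satisfy the
   Weyl relations, ∂⁺(x•) + (x•)∂⁺ = -(E + Γ), where E is the Euler
   (degree) operator and Γ the grade operator; on P_k^s this is -(k+s).
   Hence P = P⁺P + (x•)R with R = -(s+k)⁻¹ ∂⁺P, where P⁺P and R lie in the
   kernels because ∂⁺∂⁺ = 0.  If (x•)R ∈ Ker ∂⁺ with R ∈ Ker_{k-1}^{s+1} ∂⁺,
   the same identity applied to R gives (s+k) R = 0, so the sum is direct. *)

Lemma sum_antisym (F : numFieldType) (V : lmodType F) n (f : 'I_n -> 'I_n -> V) :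
  (forall i j, f i j = - f j i) -> \sum_i \sum_j f i j = 0.
Proof.
move=> fN; set S := (X in X = 0).
have SN : S = - S.
  rewrite {1}/S exchange_big /= /S -sumrN; apply: eq_bigr => i _.
  by rewrite -sumrN; apply: eq_bigr => j _; apply: fN.
have : (2%:R : F) *: S = 0 by rewrite scaler_nat mulr2n {2}SN subrr.
by move/eqP; rewrite scaler_eq0 pnatr_eq0 => /eqP.
Qed.

Lemma half_addrr (F : numFieldType) (x : F) : 2%:R^-1 * (x + x) = x.
Proof. by rewrite -mulr2n -[x *+ 2]mulr_natl mulKf ?pnatr_eq0. Qed.

Section CliffordOperators.
Variables (F : numFieldType) (m : nat).
Implicit Types (u v : Cl F m) (B C : {set 'I_m}) (i j : 'I_m).

HB.instance Definition _ := GRing.Lmodule.copy (Cl F m) {ffun {set 'I_m} -> F^o}.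

Lemma cscaleE (c : F) v : cscale c v = c *: v.
Proof. by apply/ffunP => C; rewrite !ffunE. Qed.

Definition cnt_lt j C : nat := #|[set b in C | (b < j)%N]|.
Definition cnt_gt j C : nat := #|[set b in C | (j < b)%N]|.
Definition sign_lt j C : F := (-1) ^+ cnt_lt j C.

Lemma cnt_ltU1 i j C : i \notin C -> cnt_lt j (i |: C) = (cnt_lt j C + (i < j))%N.
Proof.
move=> iC; rewrite /cnt_lt.
have -> : [set b in i |: C | (b < j)%N] =
  if (i < j)%N then i |: [set b in C | (b < j)%N] else [set b in C | (b < j)%N].
  by apply/setP=> x; case: ifP=> h; rewrite !inE;
    case: (eqVneq x i) => [->|] //=; rewrite ?h ?andbF.
case: ifP=> h; last by rewrite addn0.
by rewrite cardsU1 inE (negbTE iC) addnC.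
Qed.

Lemma sign_ltU1 i j C :
  i \notin C -> sign_lt j (i |: C) = sign_lt j C * (-1) ^+ (i < j)%N.
Proof. by move=> iC; rewrite /sign_lt cnt_ltU1 // exprD. Qed.

Lemma sign_ltD1 i j C :
  i \in C -> sign_lt j (C :\ i) = sign_lt j C * (-1) ^+ (i < j)%N.
Proof.
move=> iC; rewrite -{2}(setD1K iC) sign_ltU1 ?setD11 //.
by rewrite -mulrA -expr2 sqrr_sign mulr1.
Qed.

Lemma sign_ltD1id j C : sign_lt j (C :\ j) = sign_lt j C.
Proof.
case: (boolP (j \in C)) => jC; first by rewrite sign_ltD1 // ltnn mulr1.
by rewrite (setDidPl _) // disjoint_sym disjoints1.
Qed.

Lemma sign_ltC i j : i != j -> (-1) ^+ (i < j)%N = - (-1) ^+ (j < i)%N :> F.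
Proof.
move=> ij; case: (ltngtP i j) => [||/val_inj eij] //=; rewrite ?expr0 ?expr1 ?opprK //.
by rewrite eij eqxx in ij.
Qed.

(* [ewedge j] and [edot j] are left multiplication by e_j followed by the
   projection onto the grade raised, resp. lowered, by one; moving e_j into
   place past e_b, b < j, costs the sign [sign_lt j C]. *)
Definition ewedge j v : Cl F m :=
  [ffun C : {set 'I_m} => if j \in C then sign_lt j C * v (C :\ j) else 0].
Definition edot j v : Cl F m :=
  [ffun C : {set 'I_m} => if j \in C then 0 else - (sign_lt j C * v (j |: C))].

Fact ewedge_is_linear j : linear (ewedge j).
Proof.
move=> c u v; apply/ffunP => C; rewrite !ffunE.
by case: ifP => _; rewrite ?scaler0 ?addr0 // mulrDr; congr (_ + _); apply: mulrCA.
Qed.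
HB.instance Definition _ j :=
  GRing.isLinear.Build F (Cl F m) (Cl F m) _ (ewedge j) (ewedge_is_linear j).

Fact edot_is_linear j : linear (edot j).
Proof.
move=> c u v; apply/ffunP => C; rewrite !ffunE.
case: ifP => _; rewrite ?scaler0 ?addr0 // mulrDr opprD scalerN.
by congr (- _ - _); apply: mulrCA.
Qed.
HB.instance Definition _ j :=
  GRing.isLinear.Build F (Cl F m) (Cl F m) _ (edot j) (edot_is_linear j).

Lemma ewedgeC i j v : ewedge i (ewedge j v) = - ewedge j (ewedge i v).
Proof.
apply/ffunP=> C; rewrite !ffunE.
case: (eqVneq i j) => [->|ij]; first by rewrite !inE eqxx /= mulr0 if_same oppr0.
rewrite !inE (eq_sym j) (negbTE ij) /=.
case: (boolP (i \in C)) => iC; case: (boolP (j \in C)) => jC /=;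
  rewrite ?mulr0 ?oppr0 //.
rewrite !sign_ltD1 // (sign_ltC ij) [C :\ j :\ i]setDDl [C :\ i :\ j]setDDl setUC.
by rewrite !(mulrN, mulNr) !mulrA [sign_lt i C * _]mulrC.
Qed.

Lemma ewedge_edot i j v : i != j -> ewedge i (edot j v) = - edot j (ewedge i v).
Proof.
move=> ij; apply/ffunP=> C; rewrite !ffunE.
case: (boolP (i \in C)) => iC; case: (boolP (j \in C)) => jC; rewrite ?oppr0 //.
- by rewrite !inE jC andbT (eq_sym j) ij mulr0.
- rewrite !inE (negbTE jC) andbF /= iC orbT sign_ltD1 // sign_ltU1 // (sign_ltC ij).
  have -> : j |: C :\ i = (j |: C) :\ i.
    by apply/setP=> x; rewrite !inE; case: (eqVneq x i) => [->|]; rewrite ?(negbTE ij).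
  by rewrite !(mulrN, mulNr, opprK) !mulrA [sign_lt i C * _]mulrC.
- by rewrite !inE (negbTE iC) orbF (negbTE ij) mulr0 !oppr0.
Qed.

Lemma ewedge_edot_id j v : ewedge j (edot j v) + edot j (ewedge j v) = - v.
Proof.
apply/ffunP=> C; rewrite !ffunE.
case: (boolP (j \in C)) => jC; rewrite !inE ?eqxx /=.
  by rewrite sign_ltD1id setD1K // mulrN signrMK addr0.
by rewrite sign_ltU1 // ltnn mulr1 setU1K // signrMK add0r.
Qed.

Lemma sum_ewedge_edotE v C : (\sum_j ewedge j (edot j v)) C = - (#|C|%:R * v C).
Proof.
rewrite sum_ffunE.
transitivity (\sum_j if j \in C then - v C else 0).
  apply: eq_bigr=> j _; rewrite !ffunE; case: ifP => // jC.
  by rewrite !inE eqxx /= sign_ltD1id setD1K // mulrN signrMK.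
by rewrite -big_mkcond /= sumrN sumr_const mulr_natl.
Qed.

Definition symd j C : {set 'I_m} := ([set j] :\: C) :|: (C :\: [set j]).

Lemma symdE j C : symd j C = if j \in C then C :\ j else j |: C.
Proof.
apply/setP=> x; rewrite /symd; case: ifP=> jC; rewrite !inE;
  case: (eqVneq x j) => [->|] //=; rewrite ?jC ?andbF ?andbT ?orbF //.
Qed.

Lemma symd_eq j B C : (symd j B == C) = (B == symd j C).
Proof.
by apply/eqP/eqP=> [<-|->]; apply/setP=> x; rewrite /symd !inE;
  case: (x == j); case: (x \in B); case: (x \in C).
Qed.

Lemma csign_set1l j B : csign F [set j] B = (-1) ^+ (cnt_lt j B + (j \in B))%N.
Proof.
rewrite /csign /cnt_lt; congr (_ ^+ (_ + _)).
  rewrite -[RHS](card_imset _ (fun x y (h : (j, x) = (j, y)) => congr1 snd h)).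
  apply: eq_card => -[x y]; rewrite !inE /=; apply/idP/imsetP.
    by case/andP=> [/andP[/eqP -> yB] yj]; exists y; rewrite ?inE ?yB.
  by case=> b; rewrite inE => /andP[bB bj] [-> ->]; rewrite eqxx bB.
case: (boolP (j \in B)) => jB; first by rewrite (setIidPl _) ?cards1 // sub1set.
by rewrite disjoint_setI0 ?cards0 // disjoints1.
Qed.

Lemma csign_set1r j B : csign F B [set j] = (-1) ^+ (cnt_gt j B + (j \in B))%N.
Proof.
rewrite /csign /cnt_gt; congr (_ ^+ (_ + _)).
  rewrite -[RHS](card_imset _ (fun x y (h : (x, j) = (y, j)) => congr1 fst h)).
  apply: eq_card => -[x y]; rewrite !inE /=; apply/idP/imsetP.
    by case/andP=> [/andP[xB /eqP ->] jx]; exists x; rewrite ?inE ?xB.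
  by case=> b; rewrite inE => /andP[bB jb] [-> ->]; rewrite eqxx bB.
case: (boolP (j \in B)) => jB; first by rewrite setIC (setIidPl _) ?cards1 // sub1set.
by rewrite disjoint_setI0 ?cards0 // disjoint_sym disjoints1.
Qed.

Lemma card_cnt_lt_gt j B : #|B| = (cnt_lt j B + cnt_gt j B + (j \in B))%N.
Proof.
rewrite -(cardsID [set b : 'I_m | (b < j)%N] B).
rewrite -(cardsID [set b : 'I_m | (j < b)%N] (B :\: _)) addnA; congr (_ + _ + _).
- by apply: eq_card => x; rewrite !inE.
- by apply: eq_card => x; rewrite !inE; case: (ltngtP x j); rewrite ?andbT ?andbF.
case: (boolP (j \in B)) => jB.
  rewrite /= -(cards1 j); apply: eq_card => x; rewrite !inE.
  case: (eqVneq x j) => [->|xj]; first by rewrite ltnn jB.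
  by case: (ltngtP x j) => // /val_inj exj; rewrite exj eqxx in xj.
rewrite /= -(cards0 'I_m); apply: eq_card => x; rewrite !inE.
by case: (ltngtP x j) => //= /val_inj ->; apply/negbTE.
Qed.

Lemma cmul_vec1l j v :
  cmul (vec1 F j) v = [ffun C => csign F [set j] (symd j C) * v (symd j C)].
Proof.
apply/ffunP=> C; rewrite !ffunE (bigD1 [set j]) //= [X in _ + X]big1 ?addr0.
  rewrite (big_pred1 (symd j C)); first by rewrite ffunE eqxx mulr1.
  by move=> B /=; rewrite -/(symd j B) symd_eq.
by move=> A jA; apply: big1 => B _; rewrite ffunE (negbTE jA) mulr0 mul0r.
Qed.

Lemma cmul_vec1r j v :
  cmul v (vec1 F j) = [ffun C => csign F (symd j C) [set j] * v (symd j C)].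
Proof.
apply/ffunP=> C; rewrite !ffunE.
transitivity (\sum_(A | symd j A == C) csign F A [set j] * v A).
  rewrite [RHS]big_mkcond; apply: eq_bigr=> A _.
  rewrite big_mkcond (bigD1 [set j]) //= [X in _ + X]big1 ?addr0; last first.
    by move=> B jB; rewrite ffunE (negbTE jB) mulr0 if_same.
  by rewrite ffunE eqxx mulr1 /symd setUC.
by rewrite (big_pred1 (symd j C)) // => A /=; rewrite symd_eq.
Qed.

(* Only the grade [#|symd j C|] of [v] contributes to coordinate [C]. *)
Lemma cdot_vec1 j v : cdot (vec1 F j) v = edot j v.
Proof.
apply/ffunP=> C; rewrite /cdot sum_ffunE; set B := symd j C.
have Bm : (#|B| < m.+1)%N by rewrite ltnS -[m in (_ <= m)%N]card_ord max_card.
rewrite (bigD1 (Ordinal Bm)) //= big1 ?addr0 => [|s sB]; last first.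
  have /negbTE Bs : #|B| != s by apply: contra sB => /eqP Bs; apply/eqP/val_inj.
  by rewrite cmul_vec1l cmul_vec1r !ffunE -/B Bs !mulr0 subr0 mulr0.
rewrite cmul_vec1l cmul_vec1r !ffunE -/B eqxx csign_set1l csign_set1r.
rewrite (card_cnt_lt_gt j B) /B symdE; case: ifP => jC.
  by rewrite setD11 !addn0 exprD -mulrA signrMK subrr mulr0.
rewrite setU11 -addnA [(-1) ^+ (_ + (_ + _))%N]exprD -mulrA signrMK.
rewrite addn1 exprS mulN1r mulNr -opprD mulrN half_addrr.
by rewrite /sign_lt cnt_ltU1 ?(negbT jC) // ltnn addn0.
Qed.

Lemma cwedge_vec1 j v : cwedge (vec1 F j) v = ewedge j v.
Proof.
apply/ffunP=> C; rewrite /cwedge sum_ffunE; set B := symd j C.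
have Bm : (#|B| < m.+1)%N by rewrite ltnS -[m in (_ <= m)%N]card_ord max_card.
rewrite (bigD1 (Ordinal Bm)) //= big1 ?addr0 => [|s sB]; last first.
  have /negbTE Bs : #|B| != s by apply: contra sB => /eqP Bs; apply/eqP/val_inj.
  by rewrite cmul_vec1l cmul_vec1r !ffunE -/B Bs !mulr0 addr0 mulr0.
rewrite cmul_vec1l cmul_vec1r !ffunE -/B eqxx csign_set1l csign_set1r.
rewrite (card_cnt_lt_gt j B) /B symdE; case: ifP => jC.
  rewrite setD11 !addn0 exprD -mulrA signrMK half_addrr /sign_lt.
  by rewrite -(setD1K jC) cnt_ltU1 ?setD11 // ltnn addn0 setU1K ?setD11.
rewrite setU11 -addnA [(-1) ^+ (_ + (_ + _))%N]exprD -mulrA signrMK.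
by rewrite exprD expr1 mulrN1 mulNr addNr mulr0.
Qed.

End CliffordOperators.

Section PolynomialOperators.
Variables (F : numFieldType) (m : nat).
Implicit Types (P : Pol F m) (a : midx m) (i j : 'I_m).

Lemma xdotE P a :
  xdot P a = \sum_j (if (0 < a j)%N then edot j (P (decr a j)) else 0).
Proof. by apply: eq_bigr => j _; rewrite cdot_vec1. Qed.

Lemma dplusE P a : dplus P a = \sum_j ewedge j ((a j).+1%:R *: P (incr a j)).
Proof. by apply: eq_bigr => j _; rewrite cwedge_vec1 /pderiv cscaleE. Qed.

Lemma incrC a i j : incr (incr a j) i = incr (incr a i) j.
Proof. by apply/ffunP=> x; rewrite !ffunE addnAC. Qed.

Lemma incrK a j : decr (incr a j) j = a.
Proof. by apply/ffunP=> x; rewrite !ffunE addnK. Qed.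

Lemma decrK a j : (0 < a j)%N -> incr (decr a j) j = a.
Proof.
move=> aj; apply/ffunP=> x; rewrite !ffunE.
by case: (eqVneq x j) => [->|_]; rewrite ?subn0 ?addn0 // subnK.
Qed.

Lemma decr_incrC a i j : i != j -> decr (incr a j) i = incr (decr a i) j.
Proof.
move=> ij; apply/ffunP=> x; rewrite !ffunE.
case: (eqVneq x j) => [->|_]; first by rewrite eq_sym (negbTE ij) !subn0.
by rewrite !addn0.
Qed.

Lemma dplus_dplus P : dplus (dplus P) = fun=> 0.
Proof.
apply: functional_extensionality => a; rewrite (dplusE (dplus P)).
transitivity (\sum_j \sum_i ((a j).+1 * (incr a j i).+1)%:R *:
   ewedge j (ewedge i (P (incr (incr a j) i)))).
  apply: eq_bigr => j _; rewrite dplusE scaler_sumr linear_sum.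
  by apply: eq_bigr => i _; do 3!rewrite linearZ /=; rewrite scalerA natrM.
apply: sum_antisym => j i; rewrite ewedgeC scalerN incrC !ffunE.
by case: (eqVneq i j) => [->|ij]; rewrite // !addn0 mulnC.
Qed.

Lemma dplus_xdot_anticomm P a : dplus (xdot P) a + xdot (dplus P) a =
  \sum_j (ewedge j (edot j (P a)) - (a j)%:R *: P a).
Proof.
rewrite (dplusE (xdot P)) (xdotE (dplus P)).
transitivity (\sum_j \sum_i
  ((if (0 < incr a j i)%N then (a j).+1%:R *:
        ewedge j (edot i (P (decr (incr a j) i))) else 0) +
   (if (0 < a i)%N then (decr a i j).+1%:R *:
        edot i (ewedge j (P (incr (decr a i) j))) else 0))).
  symmetry; under eq_bigr do rewrite big_split; rewrite big_split /=; congr (_ + _).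
    apply: eq_bigr => j _; rewrite xdotE scaler_sumr linear_sum.
    apply: eq_bigr => i _.
    by case: ifP => _; [rewrite linearZ | rewrite scaler0 linear0].
  rewrite exchange_big /=; apply: eq_bigr => i _.
  case: ifP => ai; last by rewrite big1.
  by rewrite dplusE linear_sum; apply: eq_bigr => j _; rewrite !linearZ.
apply: eq_bigr => j _.
rewrite (bigD1 j) //= big1 ?addr0 => [|i ij]; last first.
  rewrite !ffunE (negbTE ij) eq_sym (negbTE ij) addn0 subn0 decr_incrC //.
  by case: ifP => _; rewrite ?addr0 // ewedge_edot 1?eq_sym // scalerN addNr.
rewrite !ffunE eqxx addn1 /= incrK mulrS scalerDl scale1r.
have [->|aj] := posnP (a j); first by rewrite mulr0n !scale0r !addr0 subr0.
by rewrite subn1 prednK // decrK // -addrA -scalerDr ewedge_edot_id scalerN.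
Qed.

Lemma dplus_xdot_euler P a C : (dplus (xdot P) a + xdot (dplus P) a) C =
  - ((deg a + #|C|)%:R * P a C).
Proof.
rewrite dplus_xdot_anticomm sumrB ffunE sum_ewedge_edotE ffunE sum_ffunE.
under eq_bigr do rewrite ffunE.
by rewrite -scaler_suml -natr_sum natrD mulrDl opprD addrC.
Qed.

End PolynomialOperators.

Section Decomposition.
Variables (F : numFieldType) (m : nat).
Implicit Types (P R : Pol F m) (a b : midx m) (j : 'I_m) (v : Cl F m) (A : {set 'I_m}).

Lemma edot_grade n j v : (forall A, #|A| <> n -> v A = 0) ->
  forall A, #|A|.+1 <> n -> edot j v A = 0.
Proof.
move=> vn A An; rewrite ffunE; case: ifP => // jA.
by rewrite vn ?mulr0 ?oppr0 // cardsU1 jA.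
Qed.

Lemma ewedge_grade n j v : (forall A, #|A|.+1 <> n -> v A = 0) ->
  forall A, #|A| <> n -> ewedge j v A = 0.
Proof.
move=> vn A An; rewrite ffunE; case: ifP => // jA.
by rewrite vn ?mulr0 // => e; apply: An; rewrite (cardsD1 j A) jA.
Qed.

Lemma xdot_grade n P : (forall b A, #|A| <> n -> P b A = 0) ->
  forall a A, #|A|.+1 <> n -> xdot P a A = 0.
Proof.
move=> Pn a A An; rewrite xdotE sum_ffunE big1 // => j _.
by case: ifP => _; [apply: edot_grade An => B; apply: Pn | rewrite ffunE].
Qed.

Lemma dplus_grade n P : (forall b A, #|A|.+1 <> n -> P b A = 0) ->
  forall a A, #|A| <> n -> dplus P a A = 0.
Proof.
move=> Pn a A An; rewrite dplusE sum_ffunE big1 // => j _.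
by apply: ewedge_grade An => B Bn; rewrite ffunE Pn // scaler0.
Qed.

Lemma deg_incr a j : deg (incr a j) = (deg a).+1.
Proof.
rewrite /deg (eq_bigr _ (fun i _ => ffunE _ i)) big_split /= -addn1; congr (_ + _)%N.
by rewrite (bigD1 j) //= eqxx big1 // => i /negbTE ->.
Qed.

Lemma xdot_deg (k : int) P : (forall b, (deg b)%:Z <> k -> P b = 0) ->
  forall a, (deg a)%:Z <> k + 1 -> xdot P a = 0.
Proof.
move=> Pk a ak; rewrite xdotE big1 // => j _; case: ifP => // aj.
rewrite Pk ?linear0 // => dk; apply: ak.
by rewrite -(decrK aj) deg_incr -addn1 PoszD dk.
Qed.

Lemma dplus_deg (k : int) P : (forall b, (deg b)%:Z <> k -> P b = 0) ->
  forall a, (deg a)%:Z <> k - 1 -> dplus P a = 0.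
Proof.
move=> Pk a ak; rewrite dplusE big1 // => j _.
rewrite Pk ?scaler0 ?linear0 // deg_incr -addn1 PoszD => dk; apply: ak.
by rewrite -dk addrK.
Qed.

Lemma inP_pscale (k : int) s c P : inP k s P -> inP k s (pscale c P).
Proof.
case=> Pk Ps; split=> [a ak | a A As]; rewrite /pscale cscaleE.
  by rewrite Pk // scaler0.
by rewrite ffunE Ps // scaler0.
Qed.

Lemma inP_xdot (k : int) s R : inP k s.+1 R -> inP (k + 1) s (xdot R).
Proof.
case=> Rk Rs; split=> [|a A As]; first exact: xdot_deg.
by apply: (xdot_grade Rs) => -[/As].
Qed.

Lemma inP_dplus (k : int) s P : inP k s P -> inP (k - 1) s.+1 (dplus P).
Proof.
case=> Pk Ps; split; first exact: dplus_deg.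
by apply: dplus_grade => a A sA; apply: Ps => As; rewrite As in sA.
Qed.

Lemma inP_dplus_xdot (k : int) s P : inP k s P -> inP k s (dplus (xdot P)).
Proof.
case=> Pk Ps; split; last exact: dplus_grade (xdot_grade Ps).
by move=> a ak; apply: (dplus_deg (xdot_deg Pk)); rewrite addrK.
Qed.

Lemma xdot_pscale c P : xdot (pscale c P) = pscale c (xdot P).
Proof.
apply: functional_extensionality => a; rewrite /pscale cscaleE !xdotE scaler_sumr.
by apply: eq_bigr => j _; case: ifP => _; rewrite ?scaler0 // cscaleE linearZ.
Qed.

Lemma dplus_pscale c P : dplus (pscale c P) = pscale c (dplus P).
Proof.
apply: functional_extensionality => a; rewrite /pscale cscaleE !dplusE scaler_sumr.
by apply: eq_bigr => j _; rewrite cscaleE scalerA mulrC -scalerA linearZ.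
Qed.

Lemma xdot0 : xdot (fun=> 0 : Cl F m) = fun=> 0.
Proof.
apply: functional_extensionality => a; rewrite xdotE big1 // => j _.
by rewrite linear0 if_same.
Qed.

Lemma dplus_pscale_dplus c P : dplus (pscale c (dplus P)) = fun=> 0.
Proof.
by rewrite dplus_pscale dplus_dplus; apply: functional_extensionality => a;
  rewrite /pscale cscaleE scaler0.
Qed.

Lemma inKer_Pplus (k s : nat) P : inP k%:Z s P -> inKer k%:Z s (Pplus s k P).
Proof.
by move=> hP; split; [apply/inP_pscale/inP_dplus_xdot | apply: dplus_pscale_dplus].
Qed.

Lemma inKer_pscale_dplus (k : int) s c P :
  inP k s P -> inKer (k - 1) s.+1 (pscale c (dplus P)).
Proof.
by move=> hP; split; [apply/inP_pscale/inP_dplus | apply: dplus_pscale_dplus].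
Qed.

Lemma dplus_xdot_inP (k s : nat) P : inP k%:Z s P ->
  forall a, dplus (xdot P) a + xdot (dplus P) a = - ((s + k)%:R *: P a).
Proof.
case=> Pk Ps a; apply/ffunP => A; rewrite dplus_xdot_euler !ffunE; congr (- _).
have [->|PaA] := eqVneq (P a A) 0; first by rewrite mulr0 scaler0.
have dk : deg a = k.
  by apply/eqP; apply: contraNT PaA => /eqP dk; rewrite Pk ?ffunE // => -[/dk].
have As : #|A| = s by apply/eqP; apply: contraNT PaA => /eqP As; rewrite Ps.
by rewrite dk As addnC.
Qed.

Lemma Pplus_complement (k s : nat) P : (0 < s + k)%N -> inP k%:Z s P ->
  psub P (Pplus s k P) = xdot (pscale (- (s + k)%:R^-1) (dplus P)).
Proof.
move=> sk hP; rewrite xdot_pscale; apply: functional_extensionality => a.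
have c0 : (s + k)%:R != 0 :> F by rewrite pnatr_eq0 -lt0n.
rewrite /psub /Pplus /pscale !cscaleE.
have -> : xdot (dplus P) a = - ((s + k)%:R *: P a) - dplus (xdot P) a.
  by rewrite -(dplus_xdot_inP hP) addrAC subrr add0r.
rewrite scalerBr scalerN scalerA mulNr mulVf //.
by rewrite scaleN1r opprK.
Qed.

Lemma ker_xdot_eq0 n R : (forall a A, #|A| <> n.+1 -> R a A = 0) ->
  dplus R = (fun=> 0) -> dplus (xdot R) = (fun=> 0) -> R = fun=> 0.
Proof.
move=> Rn dR dxR; apply: functional_extensionality => a; apply/ffunP => A.
have := dplus_xdot_euler R a A; rewrite dR dxR xdot0 addr0 !ffunE => /esym/eqP.
rewrite oppr_eq0 mulf_eq0 pnatr_eq0 addn_eq0 => /orP[/andP[_ /eqP A0]|/eqP //].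
by rewrite Rn // A0.
Qed.

End Decomposition.

Theorem proposition1 (F : numFieldType) (m k s : nat) :
  (2 <= m)%N -> (s <= m)%N -> (1 <= s + k)%N ->
  [/\ (* both summands lie in P_k^s *)
      (forall Q : Pol F m, inKer k%:Z s Q -> inP k%:Z s Q),
      (forall R : Pol F m, inKer (k%:Z - 1) s.+1 R -> inP k%:Z s (xdot R)),
      (* P_k^s is their sum *)
      (forall P : Pol F m, inP k%:Z s P ->
         exists Q R, [/\ inKer k%:Z s Q, inKer (k%:Z - 1) s.+1 R &
                         P = padd Q (xdot R)]),
      (* the sum is direct *)
      (forall Q R : Pol F m, inKer k%:Z s Q -> inKer (k%:Z - 1) s.+1 R ->
         Q = xdot R -> Q = (fun _ => 0)) &
      (* P^+ is the projection onto Ker_k^s along (x.)Ker_{k-1}^{s+1} *)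
      (forall P : Pol F m, inP k%:Z s P ->
         inKer k%:Z s (Pplus s k P) /\
         exists R, inKer (k%:Z - 1) s.+1 R /\ psub P (Pplus s k P) = xdot R)].
Proof.
move=> _ _ sk.
have proj P : inP k%:Z s P -> inKer k%:Z s (Pplus s k P) /\
    exists R, inKer (k%:Z - 1) s.+1 R /\ psub P (Pplus s k P) = xdot R.
  move=> hP; split; first exact: inKer_Pplus.
  exists (pscale (- (s + k)%:R^-1) (dplus P)).
  by split; [exact: inKer_pscale_dplus | exact: Pplus_complement].
split; last exact: proj.
- by move=> Q [].
- by move=> R [/inP_xdot]; rewrite subrK.
- move=> P /proj[PK [R [RK PR]]]; exists (Pplus s k P), R; split=> //.
  rewrite -PR; apply: functional_extensionality => a.
  by rewrite /padd /psub addrC subrK.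
- move=> Q R [_ dQ] [[_ Rs] dR] QR.
  by rewrite QR (ker_xdot_eq0 Rs dR) ?xdot0 // -QR.
Qed.
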